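(* Let $r>0$ and $p,q\in\mathbb{R}$, and for integers $n\ge2$ let $$S_{r,p,q}^{(n)}=\sum_{k=1}^{n-1}(n^r-k^r)^p\,k^q.$$ Then, as $n\to\infty$, $S_{r,p,q}^{(n)}$ is of the same order (bounded above and below by positive constant multiples) as $$\begin{cases} n^{rp+q+1}, & \min\{p,q\}>-1,\\ n^{rp+q+1}(1+\ln n), & \min\{p,q\}=-1,\\ n^{\max\{rp,\,(r-1)p+q\}}, & \min\{p,q\}<-1.\end{cases}$$ *)

From Stdlib Require Import Reals Lra Lia.
Open Scope R_scope.

(* The summand (n^r - k^r)^p * k^q, with real exponents.
   For 1 <= k <= n-1 both bases are positive, so Rpower is the usual power. *)
Definition term (r p q : R) (n k : nat) : R :=
  Rpower (Rpower (INR n) r - Rpower (INR k) r) p * Rpower (INR k) q.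

(* S_{r,p,q}^{(n)} = sum_{k=1}^{n-1} term k  (meaningful for n >= 2):
   sum_f_R0 f m = f 0 + ... + f m, so indices j = 0..n-2 give k = j+1 = 1..n-1. *)
Definition S (r p q : R) (n : nat) : R :=
  sum_f_R0 (fun j => term r p q n (S j)) (n - 2).

Definition order_fn (r p q : R) (n : nat) : R :=
  if Rlt_dec (-1) (Rmin p q) then Rpower (INR n) (r * p + q + 1)
  else if Req_EM_T (Rmin p q) (-1) then
    Rpower (INR n) (r * p + q + 1) * (1 + ln (INR n))
  else Rpower (INR n) (Rmax (r * p) ((r - 1) * p + q)).

(* Tangent-line (Bernoulli) bounds for t |-> t^r give n^r - k^r ~ n^(r-1) (n - k) uniformly
   in 1 <= k < n, so S is of the order of n^((r-1)p) B(n), where B(n) = sum_{k<n} (n-k)^p k^q.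
   On k <= n/2 the factor n - k is comparable to n, and on k >= n/2 the factor k is, so
   B(n) ~ n^p A_q(n/2) + n^q A_p(n/2) with A_q(m) = sum_{k<=m} k^q.  Telescoping k^q against
   differences of t^(q+1) (or of ln t when q = -1) shows that A_q(m) grows like m^(q+1),
   1 + ln m or 1 according as q > -1, q = -1 or q < -1, and of the two halves of B(n) the
   one with the larger exponent outside dominates: B(n) ~ n^max(p,q) A_min(p,q)(n). *)

From Pilot Require Import Defs.
From Stdlib Require Import Reals Lra Lia.
Open Scope R_scope.

Lemma INR_ge_1 k : (1 <= k)%nat -> 1 <= INR k.
Proof. intros Hk. apply (le_INR 1 k) in Hk. exact Hk. Qed.

Lemma exp_le_compat x y : x <= y -> exp x <= exp y.
Proof. intros [Hlt | ->]; [left; apply exp_increasing | right]; easy. Qed.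

Lemma ln_le_compat x y : 0 < x -> x <= y -> ln x <= ln y.
Proof. intros Hx [Hlt | ->]; [left; apply ln_increasing | right]; easy. Qed.

Lemma ln_le_sub1 x : 0 < x -> ln x <= x - 1.
Proof. intros Hx. pose proof (exp_ineq1_le (ln x)) as H. rewrite exp_ln in H; lra. Qed.

Lemma ln_nonneg x : 1 <= x -> 0 <= ln x.
Proof. intros Hx. rewrite <- ln_1. apply ln_le_compat; lra. Qed.

Lemma ln_2_lt_1 : ln 2 < 1.
Proof.
  assert (H : ln 2 <> 0) by (apply ln_neq_0; lra).
  pose proof (exp_ineq1 (ln 2) H) as Hexp. rewrite exp_ln in Hexp; lra.
Qed.

Lemma ln_le_tangent x y : 0 < x -> 0 < y -> ln y <= ln x + (y - x) / x.
Proof.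
  intros Hx Hy.
  assert (Hyx : 0 < y / x) by (apply Rdiv_lt_0_compat; lra).
  pose proof (ln_le_sub1 _ Hyx) as H.
  unfold Rdiv in H |- *. rewrite ln_mult, ln_Rinv in H by (try apply Rinv_0_lt_compat; lra).
  replace ((y - x) * / x) with (y * / x - 1) by (field; lra). lra.
Qed.

Lemma ln_le_Rpower e x : 0 < e -> 0 < x -> ln x <= Rpower x e / e.
Proof.
  intros He Hx. pose proof (ln_le_sub1 (Rpower x e) (exp_pos _)) as H.
  rewrite ln_Rpower in H. apply Rmult_le_reg_l with e; [lra |].
  replace (e * (Rpower x e / e)) with (Rpower x e) by (field; lra). lra.
Qed.

Lemma Rpower_pos x y : 0 < Rpower x y.
Proof. apply exp_pos. Qed.

Lemma Rpower_1_l y : Rpower 1 y = 1.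
Proof. unfold Rpower. rewrite ln_1, Rmult_0_r. apply exp_0. Qed.

Lemma Rpower_sub1 x s : 0 < x -> Rpower x (s - 1) = Rpower x s / x.
Proof.
  intros Hx. unfold Rminus. rewrite Rpower_plus, Rpower_Ropp, Rpower_1 by easy. reflexivity.
Qed.

Lemma Rpower_succ x q : 0 < x -> Rpower x (q + 1) = x * Rpower x q.
Proof. intros Hx. rewrite Rpower_plus, Rpower_1 by easy. ring. Qed.

Lemma Rpower_m1 x : 0 < x -> Rpower x (-1) = / x.
Proof. intros Hx. replace (-1) with (- (1)) by ring. rewrite Rpower_Ropp, Rpower_1; easy. Qed.

Lemma Rpower_le_base_nonpos x y p : p <= 0 -> 0 < x <= y -> Rpower y p <= Rpower x p.
Proof.
  intros Hp Hxy. apply exp_le_compat.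
  pose proof (ln_le_compat x y (proj1 Hxy) (proj2 Hxy)). nra.
Qed.

Lemma Rpower_between a b x p : 0 < a -> a <= x <= b ->
  Rmin (Rpower a p) (Rpower b p) <= Rpower x p <= Rmax (Rpower a p) (Rpower b p).
Proof.
  intros Ha Hx. destruct (Rle_or_lt 0 p) as [Hp | Hp].
  - pose proof (Rle_Rpower_l a x p Hp ltac:(lra)).
    pose proof (Rle_Rpower_l x b p Hp ltac:(lra)).
    split; [apply Rle_trans with (Rpower a p); [apply Rmin_l | easy]
           | apply Rle_trans with (Rpower b p); [easy | apply Rmax_r]].
  - pose proof (Rpower_le_base_nonpos a x p ltac:(lra) ltac:(lra)).
    pose proof (Rpower_le_base_nonpos x b p ltac:(lra) ltac:(lra)).
    split; [apply Rle_trans with (Rpower b p); [apply Rmin_r | easy]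
           | apply Rle_trans with (Rpower a p); [easy | apply Rmax_l]].
Qed.

Lemma Rpower_sandwich c C z x p : 0 < c -> 0 < z -> c * z <= x <= C * z ->
  Rmin (Rpower c p) (Rpower C p) * Rpower z p <= Rpower x p <=
  Rmax (Rpower c p) (Rpower C p) * Rpower z p.
Proof.
  intros Hc Hz Hx.
  assert (HC : 0 < C) by (apply Rmult_lt_reg_r with z; nra).
  destruct (Rpower_between (c * z) (C * z) x p ltac:(nra) Hx) as [Hlo Hhi].
  rewrite <- !Rpower_mult_distr in Hlo, Hhi by easy.
  pose proof (Rpower_pos z p).
  split.
  - eapply Rle_trans; [| exact Hlo]. apply Rmin_glb; apply Rmult_le_compat_r; try lra;
      [apply Rmin_l | apply Rmin_r].
  - eapply Rle_trans; [exact Hhi |]. apply Rmax_lub; apply Rmult_le_compat_r; try lra;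
      [apply Rmax_l | apply Rmax_r].
Qed.

Lemma Rpower_within_factor_2 x y p : 0 < x -> 0 < y -> x <= 2 * y -> y <= 2 * x ->
  Rpower y p <= Rpower 2 (Rabs p) * Rpower x p.
Proof.
  intros Hx Hy Hxy Hyx. unfold Rpower at 2 3. rewrite <- exp_plus. apply exp_le_compat.
  pose proof (ln_le_compat y (2 * x) Hy Hyx). pose proof (ln_le_compat x (2 * y) Hx Hxy).
  rewrite ln_mult in * by lra. pose proof (ln_nonneg 2 ltac:(lra)).
  destruct (Rle_or_lt 0 p) as [Hp | Hp]; [rewrite Rabs_right | rewrite Rabs_left]; try lra.
  - pose proof (Rmult_le_compat_l p (ln y - ln x) (ln 2) Hp ltac:(lra)). lra.
  - pose proof (Rmult_le_compat_l (- p) (ln x - ln y) (ln 2) ltac:(lra) ltac:(lra)). lra.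
Qed.

Lemma Rpower_le_bernoulli s v : 0 <= s <= 1 -> 0 < v -> Rpower v s <= 1 + s * (v - 1).
Proof.
  intros Hs Hv. set (w := 1 + s * (v - 1)).
  assert (Hw : 0 < w) by (unfold w; nra).
  pose proof (ln_le_tangent w v Hw Hv) as Hlv. pose proof (ln_le_tangent w 1 Hw ltac:(lra)) as Hl1.
  rewrite ln_1 in Hl1.
  (* the s : (1 - s) combination of the two tangent bounds at w has vanishing linear part *)
  assert (Hcancel : s * ((v - w) / w) + (1 - s) * ((1 - w) / w) = 0)
    by (unfold w in *; field; lra).
  pose proof (Rmult_le_compat_l s _ _ (proj1 Hs) Hlv).
  pose proof (Rmult_le_compat_l (1 - s) _ _ ltac:(lra) Hl1).
  unfold Rpower. rewrite <- (exp_ln w) by easy. apply exp_le_compat. lra.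
Qed.

Lemma Rpower_ge_bernoulli s v : s <= 0 \/ 1 <= s -> 0 < v -> 1 + s * (v - 1) <= Rpower v s.
Proof.
  intros [Hs | Hs] Hv.
  - unfold Rpower. eapply Rle_trans; [| apply exp_ineq1_le].
    pose proof (ln_le_sub1 v Hv). nra.
  - assert (Hinv : 0 <= / s <= 1).
    { split; [left; apply Rinv_0_lt_compat; lra |].
      rewrite <- Rinv_1. apply Rinv_le_contravar; lra. }
    pose proof (Rpower_le_bernoulli (/ s) (Rpower v s) Hinv (Rpower_pos _ _)) as H.
    rewrite Rpower_mult, Rinv_r, Rpower_1 in H by lra.
    apply Rmult_le_compat_l with (r := s) in H; [| lra].
    replace (s * (1 + / s * (Rpower v s - 1))) with (s + Rpower v s - 1) in H by (field; lra). lra.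
Qed.

Lemma Rpower_le_tangent s x y : 0 <= s <= 1 -> 0 < x -> 0 < y ->
  Rpower y s <= Rpower x s + s * Rpower x (s - 1) * (y - x).
Proof.
  intros Hs Hx Hy. replace y with (x * (y / x)) at 1 by (field; lra).
  rewrite <- Rpower_mult_distr, Rpower_sub1 by (try apply Rdiv_lt_0_compat; lra).
  pose proof (Rpower_le_bernoulli s (y / x) Hs ltac:(apply Rdiv_lt_0_compat; lra)) as H.
  pose proof (Rpower_pos x s).
  replace (Rpower x s + s * (Rpower x s / x) * (y - x)) with (Rpower x s * (1 + s * (y / x - 1)))
    by (field; lra).
  apply Rmult_le_compat_l; lra.
Qed.

Lemma Rpower_ge_tangent s x y : s <= 0 \/ 1 <= s -> 0 < x -> 0 < y ->
  Rpower x s + s * Rpower x (s - 1) * (y - x) <= Rpower y s.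
Proof.
  intros Hs Hx Hy. replace y with (x * (y / x)) at 2 by (field; lra).
  rewrite <- Rpower_mult_distr, Rpower_sub1 by (try apply Rdiv_lt_0_compat; lra).
  pose proof (Rpower_ge_bernoulli s (y / x) Hs ltac:(apply Rdiv_lt_0_compat; lra)) as H.
  pose proof (Rpower_pos x s).
  replace (Rpower x s + s * (Rpower x s / x) * (y - x)) with (Rpower x s * (1 + s * (y / x - 1)))
    by (field; lra).
  apply Rmult_le_compat_l; lra.
Qed.

Lemma Rpower_sub_between r x y : 0 < r -> 0 < y < x ->
  Rmin 1 r * (Rpower x (r - 1) * (x - y)) <= Rpower x r - Rpower y r <=
  Rmax 1 r * (Rpower x (r - 1) * (x - y)).
Proof.
  intros Hr Hyx.
  assert (Hsplit : forall z, 0 < z -> Rpower z r = Rpower z (r - 1) * z).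
  { intros z Hz. rewrite Rpower_sub1 by easy. field. lra. }
  rewrite (Hsplit x), (Hsplit y) by lra.
  pose proof (Rpower_pos x (r - 1)). pose proof (Rpower_pos y (r - 1)).
  destruct (Rle_or_lt r 1) as [Hr1 | Hr1].
  - rewrite Rmin_right, Rmax_left by lra.
    pose proof (Rpower_le_tangent r x y ltac:(lra) ltac:(lra) ltac:(lra)) as Htan.
    rewrite (Hsplit x), (Hsplit y) in Htan by lra.
    pose proof (Rpower_le_base_nonpos y x (r - 1) ltac:(lra) ltac:(lra)). nra.
  - rewrite Rmin_left, Rmax_right by lra.
    pose proof (Rpower_ge_tangent r x y ltac:(lra) ltac:(lra) ltac:(lra)) as Htan.
    rewrite (Hsplit x), (Hsplit y) in Htan by lra.
    pose proof (Rle_Rpower_l y x (r - 1) ltac:(lra) ltac:(lra)). nra.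
Qed.

(* [S] is the sum defined in [Defs], so the successor is written [Datatypes.S]. *)
Fixpoint sum_1_to (f : nat -> R) (m : nat) : R :=
  match m with
  | O => 0
  | Datatypes.S m' => sum_1_to f m' + f m
  end.

Lemma sum_1_to_le f g m : (forall k, (1 <= k <= m)%nat -> f k <= g k) ->
  sum_1_to f m <= sum_1_to g m.
Proof.
  induction m as [| m IH]; intros Hfg; simpl; [lra |].
  apply Rplus_le_compat; [apply IH; intros k Hk |]; apply Hfg; lia.
Qed.

Lemma sum_1_to_ext f g m : (forall k, (1 <= k <= m)%nat -> f k = g k) ->
  sum_1_to f m = sum_1_to g m.
Proof.
  intros Hfg. apply Rle_antisym; apply sum_1_to_le; intros k Hk; rewrite Hfg by easy; lra.
Qed.

Lemma sum_1_to_plus f g m : sum_1_to (fun k => f k + g k) m = sum_1_to f m + sum_1_to g m.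
Proof. induction m as [| m IH]; simpl; [| rewrite IH]; ring. Qed.

Lemma sum_1_to_scal c f m : sum_1_to (fun k => c * f k) m = c * sum_1_to f m.
Proof. induction m as [| m IH]; simpl; [| rewrite IH]; ring. Qed.

Lemma sum_1_to_const c m : sum_1_to (fun _ => c) m = INR m * c.
Proof. induction m as [| m IH]; simpl sum_1_to; [simpl; ring | rewrite IH, S_INR; ring]. Qed.

Lemma sum_1_to_mono f m m' : (forall k, (1 <= k <= m)%nat -> 0 <= f k) -> (m' <= m)%nat ->
  sum_1_to f m' <= sum_1_to f m.
Proof.
  intros Hf Hm. induction Hm as [| m Hm IH]; simpl; [lra |].
  pose proof (Hf (Datatypes.S m) ltac:(lia)). pose proof (IH (fun k Hk => Hf k ltac:(lia))). lra.
Qed.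

Lemma sum_1_to_shift f m :
  sum_1_to f (Datatypes.S m) = f 1%nat + sum_1_to (fun k => f (Datatypes.S k)) m.
Proof. induction m as [| m IH]; simpl in *; [| rewrite IH]; ring. Qed.

Lemma sum_1_to_rev m : forall f, sum_1_to (fun k => f (Datatypes.S m - k)%nat) m = sum_1_to f m.
Proof.
  induction m as [| m IH]; intros f; [reflexivity |].
  rewrite sum_1_to_shift. simpl (Datatypes.S (Datatypes.S m) - 1)%nat.
  change (f (Datatypes.S m) + sum_1_to (fun k => f (Datatypes.S m - k)%nat) m
          = sum_1_to f (Datatypes.S m)).
  rewrite IH. simpl. ring.
Qed.

Lemma sum_1_to_ge_telescope f g m : (1 <= m)%nat ->
  (forall k, (2 <= k <= m)%nat -> f k - f (k - 1)%nat <= g k) ->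
  g 1%nat + f m - f 1%nat <= sum_1_to g m.
Proof.
  induction m as [| m IH]; intros Hm Hstep; [lia |].
  destruct (Nat.eq_dec m 0) as [-> | Hm0]; [simpl; lra |].
  pose proof (IH ltac:(lia) (fun k Hk => Hstep k ltac:(lia))).
  pose proof (Hstep (Datatypes.S m) ltac:(lia)) as Hlast.
  replace (Datatypes.S m - 1)%nat with m in Hlast by lia. simpl. lra.
Qed.

Lemma sum_1_to_le_telescope f g m : (1 <= m)%nat ->
  (forall k, (2 <= k <= m)%nat -> g k <= f k - f (k - 1)%nat) ->
  sum_1_to g m <= g 1%nat + f m - f 1%nat.
Proof.
  induction m as [| m IH]; intros Hm Hstep; [lia |].
  destruct (Nat.eq_dec m 0) as [-> | Hm0]; [simpl; lra |].
  pose proof (IH ltac:(lia) (fun k Hk => Hstep k ltac:(lia))).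
  pose proof (Hstep (Datatypes.S m) ltac:(lia)) as Hlast.
  replace (Datatypes.S m - 1)%nat with m in Hlast by lia. simpl. lra.
Qed.

Lemma sum_f_R0_sum_1_to g m :
  sum_f_R0 (fun j => g (Datatypes.S j)) m = sum_1_to g (Datatypes.S m).
Proof. induction m as [| m IH]; simpl in *; [| rewrite IH]; ring. Qed.

Definition power_sum (q : R) (m : nat) : R := sum_1_to (fun k => Rpower (INR k) q) m.

Definition power_sum_order (q X : R) : R :=
  if Rlt_dec (-1) q then Rpower X (q + 1)
  else if Req_EM_T q (-1) then 1 + ln X
  else 1.

Lemma power_sum_ge_convex q m : q <= -1 \/ 0 <= q -> (1 <= m)%nat ->
  q + Rpower (INR m) (q + 1) <= (q + 1) * power_sum q m.
Proof.
  intros Hq Hm. unfold power_sum. rewrite <- sum_1_to_scal.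
  assert (Hstep : forall k, (2 <= k <= m)%nat ->
    Rpower (INR k) (q + 1) - Rpower (INR (k - 1)) (q + 1) <= (q + 1) * Rpower (INR k) q).
  { intros k Hk. rewrite minus_INR by lia. pose proof (le_INR 2 k (proj1 Hk)) as Hk2.
    simpl in *.
    pose proof (Rpower_ge_tangent (q + 1) (INR k) (INR k - 1)
      ltac:(destruct Hq; [left | right]; lra) ltac:(lra) ltac:(lra)).
    replace (q + 1 - 1) with q in * by ring. lra. }
  pose proof (sum_1_to_ge_telescope _ _ m Hm Hstep) as H.
  simpl in H. rewrite !Rpower_1_l in H. lra.
Qed.

Lemma power_sum_le_concave q m : -1 <= q <= 0 -> (1 <= m)%nat ->
  (q + 1) * power_sum q m <= q + Rpower (INR m) (q + 1).
Proof.
  intros Hq Hm. unfold power_sum. rewrite <- sum_1_to_scal.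
  assert (Hstep : forall k, (2 <= k <= m)%nat ->
    (q + 1) * Rpower (INR k) q <= Rpower (INR k) (q + 1) - Rpower (INR (k - 1)) (q + 1)).
  { intros k Hk. rewrite minus_INR by lia. pose proof (le_INR 2 k (proj1 Hk)) as Hk2.
    simpl in *.
    pose proof (Rpower_le_tangent (q + 1) (INR k) (INR k - 1)
      ltac:(split; lra) ltac:(lra) ltac:(lra)).
    replace (q + 1 - 1) with q in * by ring. lra. }
  pose proof (sum_1_to_le_telescope _ _ m Hm Hstep) as H.
  simpl in H. rewrite !Rpower_1_l in H. lra.
Qed.

Lemma power_sum_le_nonneg q m : 0 <= q -> power_sum q m <= Rpower (INR m) (q + 1).
Proof.
  intros Hq. destruct m as [| m]; [unfold power_sum; simpl; left; apply Rpower_pos |].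
  pose proof (INR_ge_1 (Datatypes.S m) ltac:(lia)).
  rewrite Rpower_succ, <- sum_1_to_const by lra. apply sum_1_to_le.
  intros k Hk. pose proof (INR_ge_1 k (proj1 Hk)). pose proof (le_INR _ _ (proj2 Hk)).
  apply Rle_Rpower_l; [easy | lra].
Qed.

Lemma power_sum_ge_nonpos q m : q <= 0 -> (1 <= m)%nat -> Rpower (INR m) (q + 1) <= power_sum q m.
Proof.
  intros Hq Hm. destruct m as [| m]; [lia |].
  pose proof (INR_ge_1 (Datatypes.S m) ltac:(lia)).
  rewrite Rpower_succ, <- sum_1_to_const by lra. apply sum_1_to_le.
  intros k Hk. pose proof (INR_ge_1 k (proj1 Hk)). pose proof (le_INR _ _ (proj2 Hk)).
  apply Rpower_le_base_nonpos; [easy | lra].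
Qed.

Lemma harmonic_le_ln m : (1 <= m)%nat -> power_sum (-1) m <= 1 + ln (INR m).
Proof.
  intros Hm. unfold power_sum.
  assert (Hstep : forall k, (2 <= k <= m)%nat ->
    Rpower (INR k) (-1) <= ln (INR k) - ln (INR (k - 1))).
  { intros k Hk. rewrite minus_INR by lia. pose proof (le_INR 2 k (proj1 Hk)) as Hk2.
    simpl in *. pose proof (ln_le_tangent (INR k) (INR k - 1) ltac:(lra) ltac:(lra)).
    rewrite Rpower_m1 by lra. replace ((INR k - 1 - INR k) / INR k) with (- / INR k) in *
      by (field; lra). lra. }
  pose proof (sum_1_to_le_telescope _ _ m Hm Hstep) as H.
  simpl in H. rewrite Rpower_1_l, ln_1 in H. lra.
Qed.

Lemma harmonic_ge_ln m : (1 <= m)%nat -> 1 + ln (INR m + 1) - ln 2 <= power_sum (-1) m.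
Proof.
  intros Hm. unfold power_sum.
  assert (Hstep : forall k, (2 <= k <= m)%nat ->
    ln (INR k + 1) - ln (INR (k - 1) + 1) <= Rpower (INR k) (-1)).
  { intros k Hk. rewrite minus_INR by lia. pose proof (le_INR 2 k (proj1 Hk)) as Hk2.
    simpl in *. pose proof (ln_le_tangent (INR k) (INR k + 1) ltac:(lra) ltac:(lra)).
    rewrite Rpower_m1 by lra. replace (INR k - 1 + 1) with (INR k) by ring.
    replace ((INR k + 1 - INR k) / INR k) with (/ INR k) in * by (field; lra). lra. }
  pose proof (sum_1_to_ge_telescope _ _ m Hm Hstep) as H.
  simpl in H. rewrite Rpower_1_l in H. replace (1 + 1) with 2 in H by ring. lra.
Qed.

Lemma power_sum_order_gt q X : -1 < q -> power_sum_order q X = Rpower X (q + 1).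
Proof. intros Hq. unfold power_sum_order. destruct (Rlt_dec (-1) q); [easy | lra]. Qed.

Lemma power_sum_order_m1 X : power_sum_order (-1) X = 1 + ln X.
Proof.
  unfold power_sum_order. destruct (Rlt_dec (-1) (-1)); [lra |].
  destruct (Req_EM_T (-1) (-1)); [easy | lra].
Qed.

Lemma power_sum_order_lt q X : q < -1 -> power_sum_order q X = 1.
Proof.
  intros Hq. unfold power_sum_order. destruct (Rlt_dec (-1) q); [lra |].
  destruct (Req_EM_T q (-1)); [lra | easy].
Qed.

Lemma power_sum_ge_1 q m : (1 <= m)%nat -> 1 <= power_sum q m.
Proof.
  intros Hm. pose proof (sum_1_to_mono (fun k => Rpower (INR k) q) m 1
    (fun k _ => Rlt_le _ _ (Rpower_pos _ _)) Hm) as H.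
  simpl in H. rewrite Rpower_1_l in H. unfold power_sum. lra.
Qed.

Lemma power_sum_le_convergent q m : q < -1 -> (1 <= m)%nat -> power_sum q m <= q / (q + 1).
Proof.
  intros Hq Hm. pose proof (power_sum_ge_convex q m ltac:(left; lra) Hm).
  pose proof (Rpower_pos (INR m) (q + 1)).
  apply Rmult_le_reg_l with (- (q + 1)); [lra |].
  replace (- (q + 1) * (q / (q + 1))) with (- q) by (field; lra). lra.
Qed.

Lemma power_sum_same_order q : exists c C, 0 < c /\ 0 < C /\ forall m, (1 <= m)%nat ->
  c * power_sum_order q (INR m) <= power_sum q m <= C * power_sum_order q (INR m).
Proof.
  destruct (Rtotal_order q (-1)) as [Hq | [-> | Hq]].
  - exists 1, (q / (q + 1)). split; [lra |]. split.
    { replace (q / (q + 1)) with (- q / - (q + 1)) by (field; lra). apply Rdiv_lt_0_compat; lra. }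
    intros m Hm. rewrite power_sum_order_lt, !Rmult_1_r by easy.
    split; [apply power_sum_ge_1 | apply power_sum_le_convergent]; easy.
  - exists (1 - ln 2), 1. pose proof ln_2_lt_1. split; [lra |]. split; [lra |].
    intros m Hm. rewrite power_sum_order_m1. pose proof (INR_ge_1 m Hm).
    pose proof (harmonic_le_ln m Hm). pose proof (harmonic_ge_ln m Hm).
    pose proof (ln_nonneg (INR m) ltac:(lra)). pose proof (ln_nonneg 2 ltac:(lra)).
    pose proof (ln_le_compat (INR m) (INR m + 1) ltac:(lra) ltac:(lra)). split; nra.
  - destruct (Rle_or_lt 0 q) as [Hq0 | Hq0].
    + exists (/ (q + 1)), 1. split; [apply Rinv_0_lt_compat; lra |]. split; [lra |].
      intros m Hm. rewrite power_sum_order_gt by easy.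
      pose proof (power_sum_ge_convex q m ltac:(right; lra) Hm).
      pose proof (power_sum_le_nonneg q m Hq0). split; [| lra].
      apply Rmult_le_reg_l with (q + 1); [lra |]. rewrite <- Rmult_assoc, Rinv_r; lra.
    + exists 1, (/ (q + 1)). split; [lra |]. split; [apply Rinv_0_lt_compat; lra |].
      intros m Hm. rewrite power_sum_order_gt by easy.
      pose proof (power_sum_le_concave q m ltac:(split; lra) Hm).
      pose proof (power_sum_ge_nonpos q m ltac:(lra) Hm). split; [lra |].
      apply Rmult_le_reg_l with (q + 1); [lra |]. rewrite <- Rmult_assoc, Rinv_r; lra.
Qed.

Lemma power_sum_order_mono q X Y : 1 <= X <= Y -> power_sum_order q X <= power_sum_order q Y.
Proof.
  intros HXY. destruct (Rtotal_order q (-1)) as [Hq | [-> | Hq]].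
  - rewrite !power_sum_order_lt; lra.
  - rewrite !power_sum_order_m1. pose proof (ln_le_compat X Y ltac:(lra) ltac:(lra)). lra.
  - rewrite !power_sum_order_gt by easy. apply Rle_Rpower_l; lra.
Qed.

Lemma power_sum_order_dilate q l : 1 <= l -> exists C, 0 < C /\ forall X, 1 <= X ->
  power_sum_order q (l * X) <= C * power_sum_order q X.
Proof.
  intros Hl. destruct (Rtotal_order q (-1)) as [Hq | [-> | Hq]].
  - exists 1. split; [lra |]. intros X HX. rewrite !power_sum_order_lt; lra.
  - exists (1 + ln l). pose proof (ln_nonneg l Hl). split; [lra |].
    intros X HX. rewrite !power_sum_order_m1, ln_mult by lra.
    pose proof (ln_nonneg X HX). nra.
  - exists (Rpower l (q + 1)). split; [apply Rpower_pos |].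
    intros X HX. rewrite !power_sum_order_gt, <- Rpower_mult_distr by lra. lra.
Qed.

Lemma Rpower_succ_le_power_sum_order q X : 1 <= X -> Rpower X (q + 1) <= power_sum_order q X.
Proof.
  intros HX. destruct (Rtotal_order q (-1)) as [Hq | [-> | Hq]].
  - rewrite power_sum_order_lt by lra.
    pose proof (Rle_Rpower X (q + 1) 0 HX ltac:(lra)). rewrite Rpower_O in * by lra. lra.
  - rewrite power_sum_order_m1. replace (-1 + 1) with 0 by ring. rewrite Rpower_O by lra.
    pose proof (ln_nonneg X HX). lra.
  - rewrite power_sum_order_gt; lra.
Qed.

Lemma Rpower_neg_mul_ln_le e X : 0 < e -> 1 <= X -> Rpower X (- e) * (1 + ln X) <= 1 + / e.
Proof.
  intros He HX. rewrite Rpower_Ropp.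
  pose proof (ln_le_Rpower e X He ltac:(lra)). pose proof (ln_nonneg X HX).
  pose proof (Rle_Rpower X 0 e HX ltac:(lra)) as HXe. rewrite Rpower_O in HXe by lra.
  apply Rmult_le_reg_l with (Rpower X e); [lra |].
  replace (Rpower X e * (/ Rpower X e * (1 + ln X))) with (1 + ln X) by (field; lra).
  unfold Rdiv in *. nra.
Qed.

Lemma power_sum_order_exchange p q : q <= p -> exists C, 0 < C /\ forall X, 1 <= X ->
  Rpower X q * power_sum_order p X <= C * (Rpower X p * power_sum_order q X).
Proof.
  intros Hqp. destruct (Rtotal_order p (-1)) as [Hp | [-> | Hp]].
  - exists 1. split; [lra |]. intros X HX. rewrite !power_sum_order_lt by lra.
    pose proof (Rle_Rpower X q p ltac:(lra) Hqp). lra.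
  - destruct (Req_dec q (-1)) as [-> | Hq]; [exists 1; split; [lra | intros; lra] |].
    set (e := - (q + 1)). assert (He : 0 < e) by (unfold e; lra).
    exists (1 + / e). split; [pose proof (Rinv_0_lt_compat e He); lra |].
    intros X HX. rewrite power_sum_order_m1, power_sum_order_lt by lra.
    replace q with (-1 + - e) by (unfold e; ring). rewrite Rpower_plus, Rmult_1_r.
    pose proof (Rpower_neg_mul_ln_le e X He HX). pose proof (Rpower_pos X (-1)). nra.
  - exists 1. split; [lra |]. intros X HX. rewrite power_sum_order_gt by lra.
    rewrite Rmult_1_l, <- Rpower_plus.
    replace (q + (p + 1)) with (p + (q + 1)) by ring. rewrite Rpower_plus.
    apply Rmult_le_compat_l; [left; apply Rpower_pos |].
    apply Rpower_succ_le_power_sum_order; lra.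
Qed.

Definition bounded_by (u v : nat -> R) : Prop :=
  exists C, 0 < C /\ forall n, (2 <= n)%nat -> u n <= C * v n.

Definition same_order (u v : nat -> R) : Prop := bounded_by u v /\ bounded_by v u.

Lemma bounded_by_ext u u' v v' : (forall n, (2 <= n)%nat -> u n = u' n) ->
  (forall n, (2 <= n)%nat -> v n = v' n) -> bounded_by u v -> bounded_by u' v'.
Proof.
  intros Hu Hv [C [HC Huv]]. exists C. split; [easy |].
  intros n Hn. rewrite <- Hu, <- Hv by easy. auto.
Qed.

Lemma bounded_by_trans u v w : bounded_by u v -> bounded_by v w -> bounded_by u w.
Proof.
  intros [C1 [HC1 Huv]] [C2 [HC2 Hvw]]. exists (C1 * C2). split; [nra |].
  intros n Hn. specialize (Huv n Hn). specialize (Hvw n Hn).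
  rewrite Rmult_assoc. apply Rle_trans with (1 := Huv). apply Rmult_le_compat_l; lra.
Qed.

Lemma bounded_by_plus u1 u2 v : bounded_by u1 v -> bounded_by u2 v ->
  bounded_by (fun n => u1 n + u2 n) v.
Proof.
  intros [C1 [HC1 H1]] [C2 [HC2 H2]]. exists (C1 + C2). split; [lra |].
  intros n Hn. specialize (H1 n Hn). specialize (H2 n Hn). lra.
Qed.

Lemma bounded_by_mul_l w u v : (forall n, 0 <= w n) -> bounded_by u v ->
  bounded_by (fun n => w n * u n) (fun n => w n * v n).
Proof.
  intros Hw [C [HC Huv]]. exists C. split; [easy |].
  intros n Hn. specialize (Huv n Hn). specialize (Hw n).
  replace (C * (w n * v n)) with (w n * (C * v n)) by ring. apply Rmult_le_compat_l; easy.
Qed.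

Lemma bounded_by_sum f g C : 0 < C ->
  (forall n k, (1 <= k < n)%nat -> f n k <= C * g n k) ->
  bounded_by (fun n => sum_1_to (f n) (n - 1)) (fun n => sum_1_to (g n) (n - 1)).
Proof.
  intros HC Hfg. exists C. split; [easy |]. intros n Hn.
  rewrite <- sum_1_to_scal. apply sum_1_to_le. intros k Hk. apply Hfg. lia.
Qed.

Lemma same_order_ext u u' v v' : (forall n, (2 <= n)%nat -> u n = u' n) ->
  (forall n, (2 <= n)%nat -> v n = v' n) -> same_order u v -> same_order u' v'.
Proof. intros Hu Hv [Huv Hvu]. split; eapply bounded_by_ext; eauto. Qed.

Lemma same_order_trans u v w : same_order u v -> same_order v w -> same_order u w.
Proof. intros [Huv Hvu] [Hvw Hwv]. split; eapply bounded_by_trans; eauto. Qed.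

Lemma same_order_mul_l w u v : (forall n, 0 <= w n) -> same_order u v ->
  same_order (fun n => w n * u n) (fun n => w n * v n).
Proof. intros Hw [Huv Hvu]. split; apply bounded_by_mul_l; easy. Qed.

Lemma same_order_bounds u v : same_order u v -> exists c C, 0 < c /\ 0 < C /\
  forall n, (2 <= n)%nat -> c * v n <= u n <= C * v n.
Proof.
  intros [[C [HC Huv]] [D [HD Hvu]]]. exists (/ D), C.
  split; [apply Rinv_0_lt_compat; easy |]. split; [easy |].
  intros n Hn. split; [| auto]. specialize (Hvu n Hn).
  apply Rmult_le_reg_l with D; [easy |]. rewrite <- Rmult_assoc, Rinv_r; lra.
Qed.

Lemma power_sum_pred_bounded q :
  bounded_by (fun n => power_sum q (n - 1)) (fun n => power_sum_order q (INR n)).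
Proof.
  destruct (power_sum_same_order q) as [c [C [Hc [HC Hq]]]]. exists C. split; [easy |].
  intros n Hn. destruct (Hq (n - 1)%nat ltac:(lia)) as [_ Hup].
  eapply Rle_trans; [exact Hup |]. apply Rmult_le_compat_l; [lra |].
  apply power_sum_order_mono. split; [apply INR_ge_1; lia | apply le_INR; lia].
Qed.

Lemma div2_bounds n : (2 <= n)%nat -> (1 <= n / 2 /\ 2 * (n / 2) <= n <= 3 * (n / 2))%nat.
Proof. intros Hn. pose proof (Nat.div_mod_eq n 2). pose proof (Nat.mod_upper_bound n 2). lia. Qed.

Lemma power_sum_order_bounded_by_half q :
  bounded_by (fun n => power_sum_order q (INR n)) (fun n => power_sum q (n / 2)).
Proof.
  destruct (power_sum_same_order q) as [c [C [Hc [HC Hq]]]].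
  destruct (power_sum_order_dilate q 3 ltac:(lra)) as [D [HD Hdil]].
  exists (D / c). split; [apply Rdiv_lt_0_compat; easy |]. intros n Hn.
  destruct (div2_bounds n Hn) as [Hhalf [_ Hn3]].
  pose proof (INR_ge_1 _ Hhalf). destruct (Hq (n / 2)%nat Hhalf) as [Hlow _].
  apply le_INR in Hn3. rewrite mult_INR in Hn3. replace (INR 3) with 3 in Hn3 by (simpl; ring).
  pose proof (power_sum_order_mono q (INR n) (3 * INR (n / 2))
                ltac:(split; [apply INR_ge_1; lia | easy])).
  pose proof (Hdil (INR (n / 2)) ltac:(easy)).
  apply Rle_trans with (D * power_sum_order q (INR (n / 2))); [lra |].
  replace (D / c * power_sum q (n / 2)) with (D * (/ c * power_sum q (n / 2))) by (field; lra).
  apply Rmult_le_compat_l; [lra |].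
  apply Rmult_le_reg_l with c; [easy |]. rewrite <- Rmult_assoc, Rinv_r; lra.
Qed.

Definition beta_term (p q : R) (n k : nat) : R := Rpower (INR (n - k)) p * Rpower (INR k) q.

Definition beta_sum (p q : R) (n : nat) : R := sum_1_to (beta_term p q n) (n - 1).

Lemma beta_sum_sym p q n : beta_sum p q n = beta_sum q p n.
Proof.
  unfold beta_sum. destruct n as [| n]; [reflexivity |].
  replace (Datatypes.S n - 1)%nat with n by lia.
  rewrite <- (sum_1_to_rev n (beta_term q p (Datatypes.S n))). apply sum_1_to_ext.
  intros k Hk. unfold beta_term. replace (Datatypes.S n - (Datatypes.S n - k))%nat with k by lia.
  ring.
Qed.

Lemma beta_term_le p q n k : (1 <= k < n)%nat ->
  beta_term p q n k <= Rpower 2 (Rabs p + Rabs q) *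
    (Rpower (INR n) p * Rpower (INR k) q + Rpower (INR n) q * Rpower (INR (n - k)) p).
Proof.
  intros Hk. unfold beta_term. rewrite minus_INR by lia.
  pose proof (INR_ge_1 k ltac:(lia)). pose proof (lt_INR k n ltac:(lia)).
  destruct (Nat.le_gt_cases (2 * k) n) as [Hk2 | Hk2]; [apply le_INR in Hk2 | apply lt_INR in Hk2];
    rewrite mult_INR in Hk2; simpl (INR 2) in Hk2.
  all: set (x := INR n) in *; set (y := INR k) in *; set (C := Rpower 2 (Rabs p + Rabs q)).
  all: pose proof (Rpower_pos x p); pose proof (Rpower_pos x q).
  all: pose proof (Rpower_pos y q); pose proof (Rpower_pos (x - y) p).
  - assert (Hfar : Rpower (x - y) p <= C * Rpower x p).
    { eapply Rle_trans; [apply (Rpower_within_factor_2 x); lra |].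
      apply Rmult_le_compat_r; [lra |]. apply Rle_Rpower; [lra |].
      pose proof (Rabs_pos q). lra. }
    assert (0 <= C * (Rpower x q * Rpower (x - y) p))
      by (apply Rmult_le_pos; [left; apply Rpower_pos | nra]).
    nra.
  - assert (Hfar : Rpower y q <= C * Rpower x q).
    { eapply Rle_trans; [apply (Rpower_within_factor_2 x); lra |].
      apply Rmult_le_compat_r; [lra |]. apply Rle_Rpower; [lra |].
      pose proof (Rabs_pos p). lra. }
    assert (0 <= C * (Rpower x p * Rpower y q))
      by (apply Rmult_le_pos; [left; apply Rpower_pos | nra]).
    nra.
Qed.

Lemma beta_sum_le p q : bounded_by (beta_sum p q)
  (fun n => Rpower (INR n) p * power_sum q (n - 1) + Rpower (INR n) q * power_sum p (n - 1)).
Proof.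
  eapply bounded_by_ext; [intros n Hn; reflexivity | | eapply bounded_by_sum;
    [apply (Rpower_pos 2 (Rabs p + Rabs q)) | intros n k Hk; apply beta_term_le, Hk]].
  intros n Hn. cbv beta. rewrite sum_1_to_plus, !sum_1_to_scal. unfold power_sum.
  destruct n as [| n]; [lia |]. replace (Datatypes.S n - 1)%nat with n by lia.
  rewrite (sum_1_to_rev n (fun k => Rpower (INR k) p)). reflexivity.
Qed.

Lemma beta_sum_ge p q :
  bounded_by (fun n => Rpower (INR n) p * power_sum q (n / 2)) (beta_sum p q).
Proof.
  exists (Rpower 2 (Rabs p)). split; [apply Rpower_pos |]. intros n Hn.
  unfold power_sum, beta_sum. rewrite <- sum_1_to_scal.
  apply Rle_trans with (Rpower 2 (Rabs p) * sum_1_to (beta_term p q n) (n / 2)).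
  - rewrite <- sum_1_to_scal. apply sum_1_to_le. intros k Hk. unfold beta_term.
    assert (Hk2 : (2 * k <= n)%nat) by (pose proof (div2_bounds n Hn); lia).
    rewrite minus_INR by lia. pose proof (INR_ge_1 k ltac:(lia)).
    apply le_INR in Hk2. rewrite mult_INR in Hk2. simpl (INR 2) in Hk2.
    pose proof (Rpower_within_factor_2 (INR n - INR k) (INR n) p ltac:(lra) ltac:(lra)
      ltac:(lra) ltac:(lra)).
    pose proof (Rpower_pos (INR k) q). nra.
  - apply Rmult_le_compat_l; [left; apply Rpower_pos |].
    apply sum_1_to_mono; [intros k Hk; left; apply Rmult_lt_0_compat; apply Rpower_pos |].
    pose proof (div2_bounds n Hn); lia.
Qed.

Lemma beta_sum_same_order_ordered p q : q <= p ->
  same_order (beta_sum p q) (fun n => Rpower (INR n) p * power_sum_order q (INR n)).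
Proof.
  intros Hqp. assert (Hpos : forall s n, 0 <= Rpower (INR n) s) by (intros; left; apply Rpower_pos).
  split.
  - eapply bounded_by_trans; [apply beta_sum_le |]. apply bounded_by_plus.
    + apply bounded_by_mul_l; [easy | apply power_sum_pred_bounded].
    + eapply bounded_by_trans; [apply bounded_by_mul_l; [easy | apply power_sum_pred_bounded] |].
      destruct (power_sum_order_exchange p q Hqp) as [C [HC Hexch]].
      exists C. split; [easy |]. intros n Hn. apply Hexch, INR_ge_1. lia.
  - eapply bounded_by_trans; [| apply beta_sum_ge].
    apply bounded_by_mul_l; [easy | apply power_sum_order_bounded_by_half].
Qed.

Lemma beta_sum_same_order p q : same_order (beta_sum p q)
  (fun n => Rpower (INR n) (Rmax p q) * power_sum_order (Rmin p q) (INR n)).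
Proof.
  destruct (Rle_or_lt q p) as [Hqp | Hpq].
  - rewrite Rmax_left, Rmin_right by easy. apply beta_sum_same_order_ordered, Hqp.
  - rewrite Rmax_right, Rmin_left by lra.
    apply same_order_ext with (beta_sum q p)
      (fun n => Rpower (INR n) q * power_sum_order p (INR n)).
    + intros n Hn. apply beta_sum_sym.
    + easy.
    + apply beta_sum_same_order_ordered. lra.
Qed.

Lemma term_comparable r p q : 0 < r -> exists c C, 0 < c /\ 0 < C /\
  forall n k, (1 <= k < n)%nat ->
    c * (Rpower (INR n) ((r - 1) * p) * beta_term p q n k) <= term r p q n k <=
    C * (Rpower (INR n) ((r - 1) * p) * beta_term p q n k).
Proof.
  intros Hr. set (m := Rmin 1 r). set (M := Rmax 1 r).
  assert (Hm : 0 < m) by (apply Rmin_glb_lt; lra).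
  exists (Rmin (Rpower m p) (Rpower M p)), (Rmax (Rpower m p) (Rpower M p)).
  split; [apply Rmin_glb_lt; apply Rpower_pos |].
  split; [eapply Rlt_le_trans; [| apply Rmax_l]; apply Rpower_pos |].
  intros n k Hk. unfold term, beta_term. rewrite minus_INR by lia.
  set (x := INR n). set (y := INR k).
  assert (Hy : 1 <= y) by (apply INR_ge_1; lia). assert (Hyx : y < x) by (apply lt_INR; lia).
  set (z := Rpower x (r - 1) * (x - y)).
  assert (Hz : 0 < z) by (apply Rmult_lt_0_compat; [apply Rpower_pos | lra]).
  assert (Hzp : Rpower z p = Rpower x ((r - 1) * p) * Rpower (x - y) p).
  { unfold z. rewrite <- Rpower_mult_distr, Rpower_mult by (try apply Rpower_pos; lra). easy. }
  pose proof (Rpower_sub_between r x y Hr ltac:(lra)) as Hdiff.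
  destruct (Rpower_sandwich m M z _ p Hm Hz Hdiff) as [Hlo Hhi].
  rewrite Hzp in Hlo, Hhi. pose proof (Rpower_pos y q).
  rewrite <- !Rmult_assoc. split; apply Rmult_le_compat_r; lra.
Qed.

Lemma S_sum_1_to r p q n : (2 <= n)%nat -> S r p q n = sum_1_to (term r p q n) (n - 1).
Proof. intros Hn. unfold S. rewrite sum_f_R0_sum_1_to. f_equal. lia. Qed.

Lemma S_same_order r p q : 0 < r ->
  same_order (S r p q) (fun n => Rpower (INR n) ((r - 1) * p) * beta_sum p q n).
Proof.
  intros Hr. destruct (term_comparable r p q Hr) as [c [C [Hc [HC Hterm]]]].
  apply same_order_ext with (fun n => sum_1_to (term r p q n) (n - 1))
    (fun n => sum_1_to (fun k => Rpower (INR n) ((r - 1) * p) * beta_term p q n k) (n - 1)).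
  - intros n Hn. symmetry. apply S_sum_1_to, Hn.
  - intros n Hn. apply sum_1_to_scal.
  - split.
    + apply (bounded_by_sum _ _ C HC). intros n k Hk. apply (Hterm n k Hk).
    + apply (bounded_by_sum _ _ (/ c)); [apply Rinv_0_lt_compat, Hc |].
      intros n k Hk. destruct (Hterm n k Hk) as [Hlo _].
      apply Rmult_le_reg_l with c; [easy |].
      replace (c * (/ c * term r p q n k)) with (term r p q n k) by (field; lra). easy.
Qed.

Lemma order_fn_eq r p q n : order_fn r p q n =
  Rpower (INR n) ((r - 1) * p) * (Rpower (INR n) (Rmax p q) * power_sum_order (Rmin p q) (INR n)).
Proof.
  assert (Hsum : Rmin p q + Rmax p q = p + q)
    by (unfold Rmin, Rmax; destruct (Rle_dec p q); lra).
  unfold order_fn, power_sum_order. rewrite <- Rmult_assoc, <- !Rpower_plus.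
  destruct (Rlt_dec (-1) (Rmin p q)); [| destruct (Req_EM_T (Rmin p q) (-1))].
  - rewrite <- Rpower_plus. f_equal. lra.
  - f_equal. f_equal. lra.
  - rewrite Rmult_1_r. f_equal. unfold Rmax.
    destruct (Rle_dec (r * p) ((r - 1) * p + q)), (Rle_dec p q); lra.
Qed.

Theorem lemma5 (r p q : R) (hr : 0 < r) :
  exists (c C : R) (N : nat), 0 < c /\ 0 < C /\
    forall n : nat, (2 <= n)%nat -> (N <= n)%nat ->
      c * order_fn r p q n <= S r p q n <= C * order_fn r p q n.
Proof.
  assert (Horder : same_order (S r p q) (order_fn r p q)).
  { eapply same_order_ext; [reflexivity | intros n _; symmetry; apply order_fn_eq |].
    eapply same_order_trans; [apply S_same_order, hr |].
    apply same_order_mul_l; [intros n; left; apply Rpower_pos | apply beta_sum_same_order]. }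
  destruct (same_order_bounds _ _ Horder) as [c [C [Hc [HC Hbounds]]]].
  exists c, C, 2%nat. split; [easy |]. split; [easy |]. intros n Hn _. apply Hbounds, Hn.
Qed.
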